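(* Fix a reflection matrix $\mathbf\Phi$ and let $(\{\mathbf W_k^{\star\star}\}_{k\in\mathcal K},\mathbf R_0^{\star\star})$ be an optimal solution of problem (SDR2.1). Define, for each $k\in\mathcal K$, $$\mathbf w_k^{\mathrm{opt,II}}=(\mathbf h_k^H\mathbf W_k^{\star\star}\mathbf h_k)^{-1/2}\,\mathbf W_k^{\star\star}\mathbf h_k,\qquad \mathbf R_0^{\mathrm{opt,II}}=\mathbf R_0^{\star\star}+\sum_{k\in\mathcal K}\mathbf W_k^{\star\star}-\sum_{k\in\mathcal K}\mathbf w_k^{\mathrm{opt,II}}(\mathbf w_k^{\mathrm{opt,II}})^H .$$ Then these are well defined, $\mathbf R_0^{\mathrm{opt,II}}\succeq\mathbf 0$, and $(\{\mathbf w_k^{\mathrm{opt,II}}\},\mathbf R_0^{\mathrm{opt,II}})$ is an optimal solution of problem (P2.1). In particular (P2.1) and (SDR2.1) have the same optimal value.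
   Context: Let $M,N,K\ge1$ be integers and $\mathcal K=\{1,\dots,K\}$. Fixed data: $\mathbf G\in\mathbb C^{N\times M}$, $\mathbf h_{\mathrm d,k}\in\mathbb C^{M}$ and $\mathbf h_{\mathrm r,k}\in\mathbb C^{N}$ for $k\in\mathcal K$, thresholds $\Gamma_k>0$, noise powers $\sigma_k^2>0$, and a power budget $P_0>0$. A reflection matrix is $\mathbf\Phi=\mathrm{diag}(\mathbf v)$ with $\mathbf v\in\mathbb C^N$, $|v_n|=1$ for all $n$. For a given $\mathbf\Phi$ put $\mathbf h_k=\mathbf h_{\mathrm d,k}+\mathbf G^H\mathbf\Phi^H\mathbf h_{\mathrm r,k}$ and $\mathbf H_k=\mathbf h_k\mathbf h_k^H$. For $\mathbf w_1,\dots,\mathbf w_K\in\mathbb C^M$ the Type-II SINR of user $k$ is $$\gamma_k^{\mathrm{II}}=\frac{|\mathbf h_k^H\mathbf w_k|^2}{\sum_{i\ne k}|\mathbf h_k^H\mathbf w_i|^2+\sigma_k^2},$$ and the power constraint is $\sum_{k}\|\mathbf w_k\|^2+\mathrm{tr}(\mathbf R_0)\le P_0$. For Hermitian $\mathbf X\succeq\mathbf 0$ define $f(\mathbf X)=\mathrm{tr}\big((\mathbf G\mathbf X\mathbf G^H)^{-1}\big)$ if $\mathbf G\mathbf X\mathbf G^H$ is invertible and $f(\mathbf X)=+\infty$ otherwise. Problem (P2.1) (for fixed $\mathbf\Phi$): minimize $f\big(\sum_k\mathbf w_k\mathbf w_k^H+\mathbf R_0\big)$ over $\mathbf w_k\in\mathbb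 C^M$ and Hermitian $\mathbf R_0\succeq\mathbf 0$, subject to $\gamma_k^{\mathrm{II}}\ge\Gamma_k$ for all $k$ and the power constraint. Problem (SDR2.1) (for fixed $\mathbf\Phi$): minimize $f\big(\sum_k\mathbf W_k+\mathbf R_0\big)$ over Hermitian $\mathbf W_k\succeq\mathbf 0$ ($k\in\mathcal K$) and $\mathbf R_0\succeq\mathbf 0$, subject to $\tfrac1{\Gamma_k}\mathrm{tr}(\mathbf H_k\mathbf W_k)-\sum_{i\ne k}\mathrm{tr}(\mathbf H_k\mathbf W_i)\ge\sigma_k^2$ for all $k$, and $\sum_k\mathrm{tr}(\mathbf W_k)+\mathrm{tr}(\mathbf R_0)\le P_0$. *)

(* The complex field is abstracted as an arbitrary
   numClosedFieldType C (e.g. the complex numbers R[i]); order on C compares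
   real numbers ("0 <= z" means z is real and nonnegative). *)
From HB Require Import structures.
From mathcomp Require Import all_boot all_order all_algebra.
Set Implicit Arguments. Unset Strict Implicit. Unset Printing Implicit Defensive.
Import Order.TTheory GRing.Theory Num.Theory.
Local Open Scope ring_scope.

Section Defs.
Variable C : numClosedFieldType.

Definition ctmx (m n : nat) (A : 'M[C]_(m, n)) : 'M[C]_(n, m) :=
  (map_mx Num.conj A)^T.

Definition hermitian (n : nat) (A : 'M[C]_n) : Prop := ctmx A = A.

Definition psd (n : nat) (A : 'M[C]_n) : Prop :=
  hermitian A /\ forall x : 'cV[C]_n, 0 <= (ctmx x *m A *m x) 0 0.

Definition qf (n : nat) (x : 'cV[C]_n) (A : 'M[C]_n) (y : 'cV[C]_n) : C :=
  (ctmx x *m A *m y) 0 0.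

Definition sqnorm (n : nat) (w : 'cV[C]_n) : C := (ctmx w *m w) 0 0.

(* effective channel h_k = h_{d,k} + G^H Phi^H h_{r,k}, Phi = diag(v) *)
Definition chan (M N : nat) (G : 'M[C]_(N, M)) (hd : 'cV[C]_M) (hr : 'cV[C]_N)
  (v : 'cV[C]_N) : 'cV[C]_M :=
  hd + ctmx G *m ctmx (diag_mx v^T) *m hr.

(* objective f(X) = tr((G X G^H)^{-1}) if invertible, +infinity (None) otherwise *)
Definition fobj (M N : nat) (G : 'M[C]_(N, M)) (X : 'M[C]_M) : option C :=
  let Y := G *m X *m ctmx G in
  if Y \in unitmx then Some (\tr (invmx Y)) else None.

Definition obj_le (a b : option C) : Prop :=
  match a, b with
  | _, None => True
  | None, Some _ => False
  | Some x, Some y => x <= y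
  end.

Definition sinr2 (M K : nat) (h : 'cV[C]_M) (w : 'I_K -> 'cV[C]_M) (s2 : C)
  (k : 'I_K) : C :=
  `|(ctmx h *m w k) 0 0| ^+ 2 /
  (\sum_(i < K | i != k) `|(ctmx h *m w i) 0 0| ^+ 2 + s2).

Definition feasP21 (M K : nat) (h : 'I_K -> 'cV[C]_M) (Gam s2 : 'I_K -> C)
  (P0 : C) (w : 'I_K -> 'cV[C]_M) (R0 : 'M[C]_M) : Prop :=
  psd R0 /\
  (forall k, Gam k <= sinr2 (h k) w (s2 k) k) /\
  \sum_(k < K) sqnorm (w k) + \tr R0 <= P0.

Definition objP21 (M N K : nat) (G : 'M[C]_(N, M)) (w : 'I_K -> 'cV[C]_M)
  (R0 : 'M[C]_M) : option C :=
  fobj G (\sum_(k < K) (w k *m ctmx (w k)) + R0).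

Definition optP21 (M N K : nat) (G : 'M[C]_(N, M)) (h : 'I_K -> 'cV[C]_M)
  (Gam s2 : 'I_K -> C) (P0 : C) (w : 'I_K -> 'cV[C]_M) (R0 : 'M[C]_M) : Prop :=
  feasP21 h Gam s2 P0 w R0 /\
  forall w' R0', feasP21 h Gam s2 P0 w' R0' ->
    obj_le (objP21 G w R0) (objP21 G w' R0').

(* feasibility for (SDR2.1), with H_k = h_k h_k^H *)
Definition feasSDR (M K : nat) (h : 'I_K -> 'cV[C]_M) (Gam s2 : 'I_K -> C)
  (P0 : C) (W : 'I_K -> 'M[C]_M) (R0 : 'M[C]_M) : Prop :=
  (forall k, psd (W k)) /\ psd R0 /\
  (forall k, s2 k <= (Gam k)^-1 * \tr (h k *m ctmx (h k) *m W k)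
                    - \sum_(i < K | i != k) \tr (h k *m ctmx (h k) *m W i)) /\
  \sum_(k < K) \tr (W k) + \tr R0 <= P0.

Definition objSDR (M N K : nat) (G : 'M[C]_(N, M)) (W : 'I_K -> 'M[C]_M)
  (R0 : 'M[C]_M) : option C :=
  fobj G (\sum_(k < K) W k + R0).

Definition optSDR (M N K : nat) (G : 'M[C]_(N, M)) (h : 'I_K -> 'cV[C]_M)
  (Gam s2 : 'I_K -> C) (P0 : C) (W : 'I_K -> 'M[C]_M) (R0 : 'M[C]_M) : Prop :=
  feasSDR h Gam s2 P0 W R0 /\
  forall W' R0', feasSDR h Gam s2 P0 W' R0' ->
    obj_le (objSDR G W R0) (objSDR G W' R0').

End Defs.

(* The argument has three ingredients.
   - Relaxation: a feasible point (w_k, R0) of (P2.1) gives the feasible point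
     (w_k w_k^H, R0) of (SDR2.1) with the same objective value, because
     |h^H w|^2 = tr(h h^H w w^H) and ||w||^2 = tr(w w^H).
   - Rank-one decomposition: for W psd with a = h^H W h > 0, the vector
     w = a^(-1/2) W h satisfies w w^H = a^-1 W h h^H W, W - w w^H is psd and
     |x^H w|^2 <= x^H W x for every x, with equality at x = h.  All three
     facts are consequences of the Cauchy-Schwarz inequality for psd forms.
   - Extracting beams preserves feasibility: applied to every W_k of a feasible
     (SDR2.1) point, it keeps the useful signal h_k^H W_k h_k unchanged and can
     only decrease the interference terms, while R0 absorbs the psd remainders
     so that the total covariance sum_k w_k w_k^H + R0, hence the objective and
     the transmit power, are unchanged.
   The theorem follows: the extracted point is feasible for (P2.1) and its value
   equals the (SDR2.1) optimum, which lower-bounds every (P2.1) value. *)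
From Pilot Require Import Defs.
From HB Require Import structures.
From mathcomp Require Import all_boot all_order all_algebra ring.
Import Order.TTheory GRing.Theory Num.Theory Num.Def.
Local Open Scope ring_scope.
Set Implicit Arguments. Unset Strict Implicit.

(* The SINR constraint Gam <= p / (q + s) is the linear constraint
   s <= Gam^-1 p - q used in the relaxation. *)
Lemma ratio_geE (R : numFieldType) (g p q s : R) :
  0 < g -> 0 < q + s -> (g <= p / (q + s)) = (s <= g^-1 * p - q).
Proof.
move=> g_gt0 den_gt0.
by rewrite ler_pdivlMr // lerBrDl ler_pdivlMl // mulrC.
Qed.

Section ConjugateTranspose.
Variable C : numClosedFieldType.

Lemma ctmxE m n (A : 'M[C]_(m, n)) i j : ctmx A i j = (A j i)^*.
Proof. by rewrite /ctmx !mxE. Qed.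

Lemma ctmxK m n (A : 'M[C]_(m, n)) : ctmx (ctmx A) = A.
Proof. by apply/matrixP=> i j; rewrite !ctmxE conjCK. Qed.

Lemma ctmxM m n p (A : 'M[C]_(m, n)) (B : 'M[C]_(n, p)) :
  ctmx (A *m B) = ctmx B *m ctmx A.
Proof. by rewrite /ctmx map_mxM trmx_mul. Qed.

Lemma ctmxD m n (A B : 'M[C]_(m, n)) : ctmx (A + B) = ctmx A + ctmx B.
Proof. by apply/matrixP=> i j; rewrite !(ctmxE, mxE) rmorphD. Qed.

Lemma ctmxB m n (A B : 'M[C]_(m, n)) : ctmx (A - B) = ctmx A - ctmx B.
Proof. by apply/matrixP=> i j; rewrite !(ctmxE, mxE) rmorphB. Qed.

Lemma ctmxZ m n a (A : 'M[C]_(m, n)) : ctmx (a *: A) = a^* *: ctmx A.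
Proof. by apply/matrixP=> i j; rewrite !(ctmxE, mxE) rmorphM. Qed.

Lemma mulmx_colrowE m p (A : 'M[C]_(m, 1)) (B : 'M[C]_(1, p)) i j :
  (A *m B) i j = A i 0 * B 0 j.
Proof. by rewrite mxE big_ord1. Qed.

End ConjugateTranspose.

Section QuadraticForms.
Variables (C : numClosedFieldType) (n : nat).
Implicit Types (x y z w : 'cV[C]_n) (A B W : 'M[C]_n).

Lemma qf_conj x y W : Defs.hermitian W -> qf y W x = (qf x W y)^*.
Proof.
move=> hermW; have e : ctmx (ctmx x *m W *m y) = ctmx y *m W *m x.
  by rewrite !ctmxM ctmxK hermW mulmxA.
by rewrite /qf -e ctmxE.
Qed.

Lemma qfBl x y z W c : qf (x - c *: y) W z = qf x W z - c^* * qf y W z.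
Proof. by rewrite /qf ctmxB ctmxZ !mulmxBl -!scalemxAl !mxE. Qed.

Lemma qfBr x y z W c : qf z W (x - c *: y) = qf z W x - c * qf z W y.
Proof. by rewrite /qf mulmxBr -!scalemxAr !mxE. Qed.

Lemma qf_subZ x A B c : qf x (A - c *: B) x = qf x A x - c * qf x B x.
Proof. by rewrite /qf mulmxBr mulmxBl -scalemxAr -scalemxAl !mxE. Qed.

Lemma qf_sandwich x z y W : qf x (W *m y *m ctmx y *m W) z = qf x W y * qf y W z.
Proof.
rewrite /qf; have -> : ctmx x *m (W *m y *m ctmx y *m W) *m z =
          (ctmx x *m W *m y) *m (ctmx y *m W *m z) by rewrite !mulmxA.
by rewrite mulmx_colrowE.
Qed.

Lemma qf_rank1 x w : qf x (w *m ctmx w) x = `|(ctmx x *m w) 0 0| ^+ 2.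
Proof.
have e : ctmx w *m x = ctmx (ctmx x *m w) by rewrite ctmxM ctmxK.
by rewrite /qf !mulmxA -mulmxA mulmx_colrowE e ctmxE normCK.
Qed.

Lemma tr_outer_mul y W : \tr (y *m ctmx y *m W) = qf y W y.
Proof. by rewrite -mulmxA mxtrace_mulC /qf /mxtrace big_ord1. Qed.

Lemma sqnorm_tr w : sqnorm w = \tr (w *m ctmx w).
Proof. by rewrite mxtrace_mulC /sqnorm /mxtrace big_ord1. Qed.

End QuadraticForms.

Section Psd.
Variables (C : numClosedFieldType) (n : nat).
Implicit Types (x y w : 'cV[C]_n) (A B W : 'M[C]_n).

Lemma psd0 : psd (0 : 'M[C]_n).
Proof.
split; first by apply/matrixP=> i j; rewrite ctmxE !mxE rmorph0.
by move=> x; rewrite mulmx0 mul0mx mxE.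
Qed.

Lemma psdD A B : psd A -> psd B -> psd (A + B).
Proof.
move=> [hermA posA] [hermB posB]; split.
  by rewrite /Defs.hermitian ctmxD hermA hermB.
by move=> x; rewrite mulmxDr mulmxDl mxE addr_ge0.
Qed.

Lemma psd_sum K (F : 'I_K -> 'M[C]_n) : (forall k, psd (F k)) ->
  psd (\sum_(k < K) F k).
Proof. by move=> psdF; apply: (big_ind (@psd C n)) => //; [exact: psd0 | exact: psdD]. Qed.

Lemma psd_rank1 w : psd (w *m ctmx w).
Proof.
split; first by rewrite /Defs.hermitian ctmxM ctmxK.
by move=> x; rewrite -/(qf x _ x) qf_rank1 exprn_ge0.
Qed.

Lemma psd_cauchy_schwarz W x y : psd W -> 0 < qf y W y ->
  `|qf x W y| ^+ 2 / qf y W y <= qf x W x.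
Proof.
move=> [hermW posW] a_gt0; set a := qf y W y; set b := qf x W y.
have a_neq0 : a != 0 by rewrite gt_eqF.
have a_real : a^* = a by rewrite geC0_conj // ltW.
(* expand the nonnegative value of the form at x - (b^*/a) y *)
have := posW (x - (b^* / a) *: y); rewrite -/(qf _ _ _) qfBl !qfBr.
rewrite -/a -/b (qf_conj x y hermW) -/b rmorphM /= conjCK fmorphV /= a_real.
rewrite normCK.
suff -> : qf x W x - b^* / a * b - b / a * (b^* - b^* / a * a) = qf x W x - b * b^* / a.
  by rewrite subr_ge0.
by field.
Qed.

End Psd.

Section RankOneBeam.
Variables (C : numClosedFieldType) (n : nat) (W : 'M[C]_n) (h : 'cV[C]_n).
Hypotheses (psdW : psd W) (gain_gt0 : 0 < qf h W h).

Let a := qf h W h.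

Definition extract : 'cV[C]_n := (sqrtC a)^-1 *: (W *m h).

Let isqrt_real : ((sqrtC a)^-1)^* = (sqrtC a)^-1.
Proof. by rewrite geC0_conj // invr_ge0 sqrtC_ge0 ltW. Qed.

Lemma extract_outer : extract *m ctmx extract = a^-1 *: (W *m h *m ctmx h *m W).
Proof.
case: psdW => hermW _.
rewrite /extract ctmxZ -scalemxAl -scalemxAr scalerA ctmxM hermW isqrt_real.
by rewrite -invfM -expr2 (sqrtCK a) !mulmxA.
Qed.

Lemma extract_gainE x : (ctmx x *m extract) 0 0 = (sqrtC a)^-1 * qf x W h.
Proof. by rewrite /extract -scalemxAr mxE mulmxA. Qed.

Lemma extract_gain x : `|(ctmx x *m extract) 0 0| ^+ 2 = `|qf x W h| ^+ 2 / a.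
Proof.
rewrite extract_gainE normrM exprMn normfV exprVn.
by rewrite (ger0_norm (x := sqrtC a)) ?sqrtC_ge0 ?ltW // (sqrtCK a) mulrC.
Qed.

Lemma extract_gain_le x : `|(ctmx x *m extract) 0 0| ^+ 2 <= qf x W x.
Proof. by rewrite extract_gain; exact: psd_cauchy_schwarz. Qed.

Lemma extract_gain_eq : `|(ctmx h *m extract) 0 0| ^+ 2 = a.
Proof. by rewrite extract_gain ger0_norm ?ltW // expr2 mulfK ?gt_eqF. Qed.

(* The remainder W - w w^H is psd, so it can be moved to the covariance R0. *)
Lemma psd_extract_remainder : psd (W - extract *m ctmx extract).
Proof.
case: psdW => hermW _; rewrite extract_outer; split.
  rewrite /Defs.hermitian ctmxB ctmxZ !ctmxM ctmxK hermW fmorphV /=.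
  by rewrite geC0_conj ?ltW // !mulmxA.
move=> x; rewrite -/(qf x _ x) qf_subZ qf_sandwich (qf_conj x h hermW) -normCK.
by rewrite subr_ge0 mulrC; exact: psd_cauchy_schwarz.
Qed.

End RankOneBeam.

(* Moving the remainders W_k - V_k into R0 leaves the total covariance
   unchanged; this is why the objective and power are preserved. *)
Lemma covariance_rebalance (R : zmodType) K (V W : 'I_K -> R) (R0 : R) :
  \sum_(k < K) V k + (R0 + \sum_(k < K) W k - \sum_(k < K) V k) = \sum_(k < K) W k + R0.
Proof. by rewrite addrC subrK addrC. Qed.

Section Relaxation.
Variables (C : numClosedFieldType) (M K : nat).
Variables (h : 'I_K -> 'cV[C]_M) (Gam s2 : 'I_K -> C) (P0 : C).
Hypotheses (Gam_gt0 : forall k, 0 < Gam k) (s2_gt0 : forall k, 0 < s2 k).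

Lemma sinr2_geE (w : 'I_K -> 'cV[C]_M) k :
  (Gam k <= sinr2 (h k) w (s2 k) k) =
  (s2 k <= (Gam k)^-1 * `|(ctmx (h k) *m w k) 0 0| ^+ 2
           - \sum_(i < K | i != k) `|(ctmx (h k) *m w i) 0 0| ^+ 2).
Proof.
rewrite /sinr2 ratio_geE //.
by rewrite ltr_wpDl // sumr_ge0 // => i _; rewrite exprn_ge0.
Qed.

Lemma feasP21_relax (w : 'I_K -> 'cV[C]_M) R0 :
  feasP21 h Gam s2 P0 w R0 ->
  feasSDR h Gam s2 P0 (fun k => w k *m ctmx (w k)) R0.
Proof.
move=> [psdR0 [sinr pow]]; split; first by move=> k; exact: psd_rank1.
split=> //; split.
  move=> k; rewrite tr_outer_mul qf_rank1.
  under eq_bigr do rewrite tr_outer_mul qf_rank1.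
  by rewrite -sinr2_geE.
by under eq_bigr do rewrite -sqnorm_tr.
Qed.

Lemma feasSDR_gain_gt0 W R0 k : feasSDR h Gam s2 P0 W R0 -> 0 < qf (h k) (W k) (h k).
Proof.
move=> [psdW [_ [sinr _]]].
have interf_ge0 : 0 <= \sum_(i < K | i != k) qf (h k) (W i) (h k).
  by apply: sumr_ge0 => i _; case: (psdW i) => _; apply.
have := sinr k; rewrite tr_outer_mul; under eq_bigr do rewrite tr_outer_mul.
rewrite lerBrDr => bound.
have : 0 < (Gam k)^-1 * qf (h k) (W k) (h k).
  by apply: lt_le_trans bound; rewrite ltr_wpDr.
by rewrite pmulr_rgt0 // invr_gt0.
Qed.

Section ExtractedSolution.
Variables (W : 'I_K -> 'M[C]_M) (R0 : 'M[C]_M).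
Hypothesis feasW : feasSDR h Gam s2 P0 W R0.

Let psdW k : psd (W k). Proof. by case: feasW. Qed.
Let gain_gt0 k : 0 < qf (h k) (W k) (h k). Proof. exact: feasSDR_gain_gt0 feasW. Qed.

Let w k := extract (W k) (h k).
Let R0x := R0 + \sum_(k < K) W k - \sum_(k < K) (w k *m ctmx (w k)).

Lemma psd_extract_covariance : psd R0x.
Proof.
rewrite /R0x -addrA -sumrB; apply: psdD; first by case: feasW => _ [].
by apply: psd_sum => k; exact: psd_extract_remainder.
Qed.

Lemma feasSDR_extract : feasP21 h Gam s2 P0 w R0x.
Proof.
case: feasW => _ [_ [sinr pow]]; split; first exact: psd_extract_covariance.
split.
  move=> k; rewrite sinr2_geE extract_gain_eq //; apply: (le_trans (sinr k)).
  rewrite tr_outer_mul lerD2l lerN2; apply: ler_sum => i _.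
  by rewrite tr_outer_mul; exact: extract_gain_le.
rewrite (eq_bigr _ (fun k _ => sqnorm_tr (w k))) -raddf_sum -mxtraceD.
by rewrite covariance_rebalance mxtraceD raddf_sum.
Qed.

End ExtractedSolution.
End Relaxation.

Theorem proposition3 (C : numClosedFieldType) (M N K : nat)
  (hM : (0 < M)%N) (hN : (0 < N)%N) (hK : (0 < K)%N)
  (G : 'M[C]_(N, M)) (hd : 'I_K -> 'cV[C]_M) (hr : 'I_K -> 'cV[C]_N)
  (Gam s2 : 'I_K -> C) (P0 : C)
  (hGam : forall k, 0 < Gam k) (hs2 : forall k, 0 < s2 k) (hP0 : 0 < P0)
  (v : 'cV[C]_N) (hv : forall n, `|v n 0| = 1)
  (W : 'I_K -> 'M[C]_M) (R0 : 'M[C]_M) :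
  let h := fun k => chan G (hd k) (hr k) v in
  optSDR G h Gam s2 P0 W R0 ->
  let wopt := fun k => (sqrtC (qf (h k) (W k) (h k)))^-1 *: (W k *m h k) in
  let R0opt := R0 + \sum_(k < K) W k - \sum_(k < K) (wopt k *m ctmx (wopt k)) in
  (forall k, 0 < qf (h k) (W k) (h k)) /\
  psd R0opt /\
  optP21 G h Gam s2 P0 wopt R0opt /\
  objP21 G wopt R0opt = objSDR G W R0.
Proof.
move=> h [feasW optW] wopt R0opt.
have same_value : objP21 G wopt R0opt = objSDR G W R0.
  by rewrite /objP21 /objSDR /R0opt covariance_rebalance.
split; first by move=> k; exact: (feasSDR_gain_gt0 hGam hs2 k feasW).
split; first exact: (psd_extract_covariance hGam hs2 feasW).
split=> //; split; first exact: (feasSDR_extract hGam hs2 feasW).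
move=> w' R0' feas'; rewrite same_value.
exact: optW (feasP21_relax hGam hs2 feas').
Qed.
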